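(* The perfect-secrecy capacity of a $(\rho_r,\rho_w)$-AWTP channel satisfies $\mathsf C^0\le 1-\rho_r-\rho_w$; that is, every rate achievable by a family of perfectly secure ($\epsilon=0$) AWTP codes for the channel is at most $1-\rho_r-\rho_w$.
   Context: $\Sigma$ finite additive group, $[N]=\{1,\dots,N\}$. $(\rho_r,\rho_w)$-AWTP channel: adaptive unbounded adversary reads the sent codeword $c\in\Sigma^N$ on a set $S_r$, $|S_r|\le\rho_rN$, and adds an error vector supported in a set $S_w$, $|S_w|\le\rho_wN$, depending on its view. An $(\epsilon,\delta)$-AWTP code: randomized encoder $\mathcal M\to\Sigma^N$ and deterministic decoder $\Sigma^N\to\mathcal M$ such that adversary views for any two messages have statistical distance at most $\epsilon$ and decoding error probability is at most $\delta$ for every adversary; perfectly secure means $\epsilon=0$. Rate $\log|\mathcal M|/(N\log|\Sigma|)$. A family $\{C^N\}$ achieves rate $R$ if for every $\xi>0$ there is $N_0$ with, for all $N\ge N_0$, rate of $C^N\ge R-\xi$ and error probability $\le\xi$. $\mathsf C^0$ is the largest achievable rate over perfectly secure code families. *)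

From HB Require Import structures.
From mathcomp Require Import all_boot all_order all_algebra.
From Stdlib Require Import Reals.

Set Implicit Arguments.
Unset Strict Implicit.
Unset Printing Implicit Defensive.

Definition word (Sigma : finZmodType) (N : nat) := {ffun 'I_N -> Sigma}.

Definition rsum (T : finType) (f : T -> R) : R := \big[Rplus/R0]_(x : T) f x.

Definition prob (T : finType) (p : T -> R) (E : pred T) : R :=
  rsum (fun x => if E x then p x else R0).

Definition is_distr (T : finType) (p : T -> R) : Prop :=
  (forall x, Rle R0 (p x)) /\ rsum p = R1.

(* An AWTP code of length N: message set, randomized encoder (a probability
   distribution on codewords for each message), deterministic decoder. *)
Record awtp_code (Sigma : finZmodType) (N : nat) := AWTPCode {
  msg : finType;
  enc : msg -> word Sigma N -> R;
  dec : word Sigma N -> msg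
}.
Arguments msg {Sigma N} a.
Arguments enc {Sigma N} a _.
Arguments dec {Sigma N} a _.

Definition code_wf (Sigma : finZmodType) (N : nat) (C : awtp_code Sigma N) :=
  forall m, is_distr (enc C m).

(* Adaptive reading strategy: the next position to read is chosen as a
   function of everything read so far (positions and values). *)
Definition read_strategy (Sigma : finZmodType) (N : nat) :=
  seq ('I_N * Sigma) -> 'I_N.

Fixpoint run_reads (Sigma : finZmodType) (N : nat)
    (nxt : read_strategy Sigma N) (c : word Sigma N) (k : nat)
    (acc : seq ('I_N * Sigma)) : seq ('I_N * Sigma) :=
  match k with
  | 0 => acc
  | k'.+1 => let i := nxt acc in run_reads nxt c k' (rcons acc (i, c i))
  end.

Definition view (Sigma : finZmodType) (N : nat)
    (nxt : read_strategy Sigma N) (k : nat) (c : word Sigma N) :=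
  run_reads nxt c k [::].

(* A (deterministic, adaptive, unbounded) (rho_r, rho_w)-AWTP adversary:
   k adaptive reads with k <= rho_r N (so |S_r| <= rho_r N), then an error
   vector, chosen as a function of the view, whose support S_w has
   |S_w| <= rho_w N. *)
Record adversary (Sigma : finZmodType) (N : nat) := Adversary {
  nreads : nat;
  reads : read_strategy Sigma N;
  write : seq ('I_N * Sigma) -> word Sigma N
}.
Arguments nreads {Sigma N} a.
Arguments reads {Sigma N} a _.
Arguments write {Sigma N} a _.

Definition support (Sigma : finZmodType) (N : nat) (e : word Sigma N) :=
  [set i : 'I_N | e i != GRing.zero].

Definition adversary_ok (Sigma : finZmodType) (N : nat) (rho_r rho_w : R)
    (A : adversary Sigma N) : Prop :=
  Rle (INR (nreads A)) (Rmult rho_r (INR N)) /\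
  forall v, Rle (INR #|support (write A v)|) (Rmult rho_w (INR N)).

Definition view_prob (Sigma : finZmodType) (N : nat) (C : awtp_code Sigma N)
    (A : adversary Sigma N) (m : msg C) (v : seq ('I_N * Sigma)) : R :=
  prob (enc C m) (fun c => view (reads A) (nreads A) c == v).

(* Statistical distance between the view distributions for m1 and m2
   (the sum ranges over all views of positive probability under either). *)
Definition view_dist (Sigma : finZmodType) (N : nat) (C : awtp_code Sigma N)
    (A : adversary Sigma N) (m1 m2 : msg C) : R :=
  Rmult (/ 2)
    (\big[Rplus/R0]_(v <- undup [seq view (reads A) (nreads A) c | c : word Sigma N])
       Rabs (Rminus (view_prob A m1 v) (view_prob A m2 v))).

Definition received (Sigma : finZmodType) (N : nat) (A : adversary Sigma N)
    (c : word Sigma N) : word Sigma N :=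
  [ffun i => GRing.add (c i) (write A (view (reads A) (nreads A) c) i)].

Definition dec_error (Sigma : finZmodType) (N : nat) (C : awtp_code Sigma N)
    (A : adversary Sigma N) (m : msg C) : R :=
  prob (enc C m) (fun c => dec C (received A c) != m).

Definition is_awtp_code (Sigma : finZmodType) (N : nat) (rho_r rho_w eps delta : R)
    (C : awtp_code Sigma N) : Prop :=
  code_wf C /\
  forall A : adversary Sigma N, adversary_ok rho_r rho_w A ->
    (forall m1 m2 : msg C, Rle (view_dist A m1 m2) eps) /\
    (forall m : msg C, Rle (dec_error A m) delta).

Definition rate (Sigma : finZmodType) (N : nat) (C : awtp_code Sigma N) : R :=
  Rdiv (ln (INR #|msg C|)) (Rmult (INR N) (ln (INR #|Sigma|))).

Definition achievable_perfect (Sigma : finZmodType) (rho_r rho_w Rt : R) : Prop :=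
  exists Cf : forall N : nat, awtp_code Sigma N,
  exists deltaf : nat -> R,
    (forall N, is_awtp_code rho_r rho_w R0 (deltaf N) (Cf N)) /\
    forall xi : R, Rlt R0 xi ->
      exists N0 : nat, forall N : nat, (N0 <= N)%nat ->
        Rle (Rminus Rt xi) (rate (Cf N)) /\ Rle (deltaf N) xi.

From Pilot Require Import Defs.
From HB Require Import structures.
From mathcomp Require Import all_boot all_order all_algebra.
From Stdlib Require Import Reals.
From mathcomp Require Import Rstruct zify.
From Stdlib Require Import Lra.

(* Fix a length N = n + 1 and split the positions into a read prefix [0, k),
   a write window [k, k + w) and a tail, with k <= rho_r N and w <= rho_w N.
   Two admissible adversaries are used:
   - the eavesdropper reading the prefix; perfect secrecy against it means
     that the distribution of the prefix does not depend on the message;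
   - for every error u supported in the window, the jammer adding u; each
     such error is then corrected with probability at least 1 - delta.
   Averaging over the window errors and grouping codewords by their prefix
   and tail, a counting argument gives |M| (1 - delta) <= |Sigma|^(N-k-w)
   (message_count_bound, then awtp_message_bound).  Taking logarithms, the
   rate is at most 1 - rho_r - rho_w + O(1/N) (rate_upper_bound), and
   letting N grow along an achieving family yields the theorem. *)

Set Implicit Arguments.
Unset Strict Implicit.
Unset Printing Implicit Defensive.
Import Order.TTheory GRing.Theory Num.Theory.

Local Open Scope ring_scope.

Section Windows.

Variables (Sigma : finZmodType) (n k w : nat).

Local Notation codeword := (word Sigma n.+1).

Definition in_window (i : 'I_n.+1) : bool := (k <= i < k + w)%nat.

Definition agree_prefix (c c' : codeword) : bool :=
  [forall i : 'I_n.+1, (i < k)%nat ==> (c i == c' i)].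

Definition window_error (u : codeword) : bool :=
  [forall i : 'I_n.+1, ~~ in_window i ==> (u i == 0)].

Definition clear_window (c : codeword) : codeword :=
  [ffun i => if in_window i then 0 else c i].

Lemma clear_windowK (c : codeword) :
  clear_window (clear_window c) = clear_window c.
Proof. by apply/ffunP => i; rewrite !ffunE; case: (in_window i). Qed.

Lemma agree_prefix_clear (c : codeword) : agree_prefix c (clear_window c).
Proof.
apply/forallP => i; apply/implyP => ik.
by rewrite ffunE /in_window leqNgt ik.
Qed.

Lemma window_error0 : window_error 0.
Proof. by apply/forallP => i; rewrite ffunE eqxx implybT. Qed.

(* Window errors form a subgroup, hence translating by one is a bijection. *)
Lemma window_errorD (d u : codeword) :
  window_error d -> window_error (d + u) = window_error u.
Proof.
move=> /forallP d_win; apply/forallP/forallP => H i; have := H i; have := d_win i;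
  by case: (in_window i) => //= /eqP d0; rewrite ffunE d0 ?add0r.
Qed.

Lemma window_error_clear (c : codeword) : window_error (c - clear_window c).
Proof.
by apply/forallP => i; apply/implyP => out; rewrite !ffunE (negbTE out) subrr.
Qed.

Lemma card_support_window (u : codeword) :
  window_error u -> (#|Defs.support u| <= w)%nat.
Proof.
move=> /forallP u_win.
pose pos (j : 'I_w) : 'I_n.+1 := inord (k + j).
apply: leq_trans (_ : #|[set pos j | j in 'I_w]| <= w)%nat; last first.
  by apply: leq_trans (leq_imset_card _ _) _; rewrite card_ord.
apply: subset_leq_card; apply/subsetP => i; rewrite inE => ui.
have /andP[ki ikw] : in_window i.
  by apply: contraNT ui => out; have /implyP/(_ out)/eqP -> := u_win i; rewrite eqxx.
have ij : (i - k < w)%nat by lia.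
apply/imsetP; exists (Ordinal ij) => //.
by apply: val_inj; rewrite /pos /= inordK; have := ltn_ord i; lia.
Qed.

(* Once the read prefix is fixed, an erased codeword is determined by its
   n.+1 - k - w tail symbols. *)
Lemma card_cleared_agreeing (c : codeword) :
  (k + w <= n.+1)%nat ->
  (#|[pred z : codeword | (clear_window z == z) && agree_prefix c z]|
     <= expn #|Sigma| (n.+1 - k - w))%nat.
Proof.
move=> kw.
pose tail (z : codeword) : {ffun 'I_(n.+1 - k - w) -> Sigma} :=
  [ffun j : 'I_(n.+1 - k - w) => z (inord (k + w + j))].
rewrite -(card_in_imset (f := tail)); last first.
  move=> z1 z2; rewrite !inE => /andP[/eqP z1E /forallP a1] /andP[/eqP z2E /forallP a2].
  move=> tailE; apply/ffunP => i.
  have [ik|ki] := ltnP i k.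
    by move: (a1 i) (a2 i); rewrite ik /= => /eqP <- /eqP <-.
  have [ikw|kwi] := ltnP i (k + w).
    by rewrite -z1E -z2E !ffunE /in_window ki ikw.
  have ij : (i - (k + w) < n.+1 - k - w)%nat by have := ltn_ord i; lia.
  have := congr1 (fun g : {ffun _ -> _} => g (Ordinal ij)) tailE; rewrite !ffunE /=.
  suff -> : (inord (k + w + (i - (k + w))) : 'I_n.+1) = i by [].
  by apply: val_inj; rewrite /= inordK; have := ltn_ord i; lia.
by apply: leq_trans (max_card _) _; rewrite card_ffun card_ord.
Qed.

End Windows.

Section EncoderDistributions.

Variables (Sigma : finZmodType) (N : nat) (C : awtp_code Sigma N).
Hypothesis C_wf : code_wf C.

Lemma enc_ge0 (m : msg C) (c : word Sigma N) : 0 <= enc C m c.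
Proof. by case: (C_wf m) => ge0 _; apply/RleP. Qed.

Lemma enc_sum1 (m : msg C) : \sum_c enc C m c = 1.
Proof. by case: (C_wf m). Qed.

End EncoderDistributions.

Section Counting.

Variables (Sigma : finZmodType) (n : nat) (C : awtp_code Sigma n.+1) (k w : nat).
Hypothesis C_wf : code_wf C.

Local Notation codeword := (word Sigma n.+1).
Local Notation window_errors := [pred u : codeword | window_error k w u].

Definition hits (m : msg C) (c : codeword) : R :=
  \sum_(u in window_errors) ((dec C (c + u) == m)%:R : R).

Definition prefix_prob (m : msg C) (z : codeword) : R :=
  \sum_(c | agree_prefix k c z) enc C m c.

Lemma hits_ge0 (m : msg C) (c : codeword) : 0 <= hits m c.
Proof. by apply: sumr_ge0 => u _; apply: ler0n. Qed.

(* The coset c + window errors only depends on c outside the window. *)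
Lemma hits_clear (m : msg C) (c : codeword) :
  hits m (clear_window k w c) = hits m c.
Proof.
rewrite /hits; set d := c - clear_window k w c.
rewrite [LHS](reindex_inj (h := fun u => d + u)) /=; last by move=> x y /addrI.
apply: eq_big => u; first by rewrite !inE window_errorD // window_error_clear.
by move=> _; rewrite addrA /d [clear_window k w c + _]addrC subrK.
Qed.

(* Every corrupted word decodes to exactly one message. *)
Lemma sum_hits (c : codeword) : \sum_(m : msg C) hits m c = #|window_errors|%:R.
Proof.
rewrite /hits exchange_big /= -sumr_const; apply: eq_bigr => u _.
rewrite (bigD1 (dec C (c + u))) //= eqxx big1 ?addr0 // => m.
by rewrite eq_sym => /negbTE ->.
Qed.

Lemma expected_hits_ge (delta : R) (m : msg C) :
  (forall u : codeword, window_error k w u ->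
     1 - delta <= \sum_c enc C m c * (dec C (c + u) == m)%:R) ->
  #|window_errors|%:R * (1 - delta) <= \sum_c enc C m c * hits m c.
Proof.
move=> success; rewrite /hits; under eq_bigr do rewrite mulr_sumr.
rewrite exchange_big /= mulr_natl -sumr_const.
by apply: ler_sum => u; apply: success.
Qed.

(* Grouping codewords by their erasure, whose prefix they share. *)
Lemma expected_hits_le (m : msg C) :
  \sum_c enc C m c * hits m c <=
  \sum_(z | clear_window k w z == z) hits m z * prefix_prob m z.
Proof.
under eq_bigr do rewrite -hits_clear.
rewrite (partition_big (clear_window k w) (fun z => clear_window k w z == z)) /=;
  last by move=> c _; rewrite clear_windowK.
apply: ler_sum => z _.
rewrite (eq_bigr (fun c => hits m z * enc C m c)); last by move=> c /eqP ->; rewrite mulrC.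
rewrite -mulr_sumr; apply: ler_wpM2l; first exact: hits_ge0.
rewrite /prefix_prob [X in _ <= X]big_mkcond [X in X <= _]big_mkcond; apply: ler_sum => c _.
case: eqP => [<-|_]; first by rewrite agree_prefix_clear.
by case: ifP; rewrite ?(enc_ge0 C_wf).
Qed.

(* Each codeword agrees on the prefix with at most |Sigma|^(n+1-k-w) erased words. *)
Lemma sum_prefix_prob_cleared (m : msg C) :
  (k + w <= n.+1)%nat ->
  \sum_(z | clear_window k w z == z) prefix_prob m z
    <= (expn #|Sigma| (n.+1 - k - w))%:R.
Proof.
move=> kw; rewrite /prefix_prob (exchange_big_dep xpredT) //=.
apply: (@le_trans _ _ ((expn #|Sigma| (n.+1 - k - w))%:R * \sum_c enc C m c));
  last by rewrite (enc_sum1 C_wf) mulr1.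
rewrite mulr_sumr; apply: ler_sum => c _.
rewrite sumr_const -[_ *+ _]mulr_natr [X in X <= _]mulrC.
apply: ler_wpM2r; first exact: (enc_ge0 C_wf).
by rewrite ler_nat card_cleared_agreeing.
Qed.

Theorem message_count_bound (delta : R) :
  (k + w <= n.+1)%nat ->
  (forall (m1 m2 : msg C) (z : codeword), prefix_prob m1 z = prefix_prob m2 z) ->
  (forall (m : msg C) (u : codeword), window_error k w u ->
     1 - delta <= \sum_c enc C m c * (dec C (c + u) == m)%:R) ->
  #|msg C|%:R * (1 - delta) <= (expn #|Sigma| (n.+1 - k - w))%:R.
Proof.
(* With U the window errors: |U| |M| (1 - delta) <= sum_m E_m[hits m]
   <= sum_z prefix_prob z * sum_m hits m z = |U| sum_z prefix_prob z <= |U| q. *)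
move=> kw secrecy success.
have [m0 _|no_msg] := pickP (msg C); last first.
  by rewrite (eq_card0 no_msg) mul0r ler0n.
have win_pos : 0 < #|window_errors|%:R :> R.
  by rewrite ltr0n; apply/card_gt0P; exists 0; rewrite inE window_error0.
rewrite -(ler_pM2l win_pos) mulrCA mulr_natl -sumr_const.
apply: le_trans (ler_sum _ (fun m _ => expected_hits_ge (success m))) _.
apply: le_trans (ler_sum _ (fun m _ => expected_hits_le m)) _.
rewrite exchange_big /=.
rewrite (eq_bigr (fun z => #|window_errors|%:R * prefix_prob m0 z)); last first.
  move=> z _; rewrite (eq_bigr (fun m => prefix_prob m0 z * hits m z)).
    by rewrite -mulr_sumr sum_hits mulrC.
  by move=> m _; rewrite mulrC (secrecy m m0).
rewrite -mulr_sumr; apply: ler_wpM2l; first exact: ler0n.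
exact: sum_prefix_prob_cleared.
Qed.

End Counting.

Section SecrecyAndDecoding.

Variables (Sigma : finZmodType) (N : nat) (C : awtp_code Sigma N).

Lemma view_prob_eq_of_dist0 (A : adversary Sigma N) (m1 m2 : msg C)
    (c : word Sigma N) :
  Rle (view_dist A m1 m2) R0 ->
  view_prob A m1 (view (reads A) (nreads A) c) =
  view_prob A m2 (view (reads A) (nreads A) c).
Proof.
rewrite /view_dist; set v := view _ _ c; set views := undup _ => dist0.
have v_in : v \in views by rewrite mem_undup; apply/mapP; exists c; rewrite ?mem_enum.
move: dist0; rewrite (bigD1_seq v v_in (undup_uniq _)) /=.
set a := Rabs _; set b := \big[_/_]_(_ <- _ | _) _ => dist0.
have b_ge0 : Rle R0 b.
  by apply/RleP; apply: sumr_ge0 => v' _; apply/RleP; apply: Rabs_pos.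
have a0 : a = R0 by apply: Rle_antisym; [lra | apply: Rabs_pos].
by move: a0; rewrite /a RabsE RminusE => /eqP; rewrite normr_eq0 subr_eq0 => /eqP.
Qed.

Lemma dec_success (A : adversary Sigma N) (m : msg C) :
  code_wf C ->
  1 - dec_error A m = \sum_c enc C m c * (dec C (received A c) == m)%:R.
Proof.
move=> C_wf; rewrite -[1 in LHS](enc_sum1 C_wf m) /dec_error /prob /rsum.
apply/eqP; rewrite subr_eq -big_split /=; apply/eqP/eq_bigr => c _.
by case: eqP; rewrite ?mulr1 ?mulr0 ?addr0 ?add0r.
Qed.

End SecrecyAndDecoding.

Section PrefixAdversaries.

Variables (Sigma : finZmodType) (n : nat).

Local Notation codeword := (word Sigma n.+1).

Definition read_prefix : read_strategy Sigma n.+1 := fun acc => inord (size acc).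

Lemma run_read_prefix (c : codeword) (j : nat) (acc : seq ('I_n.+1 * Sigma)) :
  run_reads read_prefix c j acc =
  acc ++ [seq (inord i, c (inord i)) | i <- iota (size acc) j].
Proof.
elim: j acc => [|j IH] acc /=; first by rewrite cats0.
by rewrite IH size_rcons -cats1 -catA.
Qed.

Lemma view_read_prefix_eq (k : nat) (c c' : codeword) :
  (k <= n.+1)%nat ->
  (view read_prefix k c == view read_prefix k c') = agree_prefix k c c'.
Proof.
move=> kN; rewrite /view !run_read_prefix /=; apply/eqP/forallP.
- move/eq_in_map => same i; apply/implyP => ik.
  have := same i; rewrite mem_iota add0n => /(_ ik) [].
  by rewrite inord_val => ->.
- move=> agree; apply/eq_in_map => i; rewrite mem_iota add0n /= => ik.
  have iN : (i < n.+1)%nat by apply: leq_trans ik kN.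
  by have := agree (inord i); rewrite inordK // ik /= => /eqP ->.
Qed.

Definition prefix_reader (k : nat) : adversary Sigma n.+1 :=
  Adversary k read_prefix (fun _ => 0).

Definition window_writer (u : codeword) : adversary Sigma n.+1 :=
  Adversary 0 read_prefix (fun _ => u).

Lemma prefix_reader_ok (rho_r rho_w : R) (k : nat) :
  Rle R0 rho_w -> Rle (INR k) (Rmult rho_r (INR n.+1)) ->
  adversary_ok rho_r rho_w (prefix_reader k).
Proof.
move=> rho_w_ge0 k_le; split=> // v.
have -> : Defs.support (write (prefix_reader k) v) = set0.
  by apply/setP => i; rewrite !inE ffunE eqxx.
by rewrite cards0; apply: Rmult_le_pos => //; apply: pos_INR.
Qed.

Lemma window_writer_ok (rho_r rho_w : R) (k w : nat) (u : codeword) :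
  Rle R0 rho_r -> Rle (INR w) (Rmult rho_w (INR n.+1)) -> window_error k w u ->
  adversary_ok rho_r rho_w (window_writer u).
Proof.
move=> rho_r_ge0 w_le u_win; split=> [|v].
  by apply: Rmult_le_pos => //; apply: pos_INR.
apply: Rle_trans w_le; apply: le_INR; apply/ssrnat.leP.
exact: card_support_window u_win.
Qed.

Variable C : awtp_code Sigma n.+1.

Lemma prefix_prob_indep (k : nat) :
  (k <= n.+1)%nat ->
  (forall m1 m2 : msg C, Rle (view_dist (prefix_reader k) m1 m2) R0) ->
  forall (m1 m2 : msg C) (z : codeword),
    prefix_prob k m1 z = prefix_prob k m2 z.
Proof.
move=> kN secure m1 m2 z.
have prefix_view m : view_prob (prefix_reader k) m (view read_prefix k z) =
    prefix_prob k m z.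
  rewrite /view_prob /prob /rsum /prefix_prob [RHS]big_mkcond.
  by apply: eq_bigr => c _ /=; rewrite view_read_prefix_eq.
by rewrite -!prefix_view; apply: view_prob_eq_of_dist0.
Qed.

Lemma window_success (delta : R) (m : msg C) (u : codeword) :
  code_wf C -> Rle (dec_error (window_writer u) m) delta ->
  1 - delta <= \sum_c enc C m c * (dec C (c + u) == m)%:R.
Proof.
move=> C_wf err_le.
have -> : \sum_c enc C m c * (dec C (c + u) == m)%:R =
          1 - dec_error (window_writer u) m.
  by rewrite dec_success.
by rewrite lerD2l lerN2; apply/RleP.
Qed.

End PrefixAdversaries.

Lemma awtp_message_bound (Sigma : finZmodType) (n : nat) (C : awtp_code Sigma n.+1)
    (rho_r rho_w delta : R) (k w : nat) :
  Rle R0 rho_r -> Rle R0 rho_w -> (k + w <= n.+1)%nat ->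
  Rle (INR k) (Rmult rho_r (INR n.+1)) -> Rle (INR w) (Rmult rho_w (INR n.+1)) ->
  is_awtp_code rho_r rho_w R0 delta C ->
  Rle (INR #|msg C| * (1 - delta)) (INR (expn #|Sigma| (n.+1 - k - w))).
Proof.
move=> rho_r_ge0 rho_w_ge0 kw k_le w_le [C_wf attacks].
apply/RleP; rewrite !INRE; apply: message_count_bound => //.
- apply: prefix_prob_indep; first by lia.
  exact: (attacks _ (prefix_reader_ok _ rho_w_ge0 k_le)).1.
- move=> m u u_win; apply: window_success => //.
  exact: (attacks _ (window_writer_ok rho_r_ge0 w_le u_win)).2.
Qed.

Local Close Scope ring_scope.
Local Open Scope R_scope.

(* Stdlib's ln is total, with ln 0 = 0. *)
Lemma ln_INR0 : ln (INR 0) = 0.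
Proof.
rewrite /ln /=; case: (Rlt_dec 0 0) => [lt00|//].
by case: (Rlt_irrefl _ lt00).
Qed.

Lemma ln_le (x y : R) : 0 < x -> x <= y -> ln x <= ln y.
Proof.
move=> x_pos /Rle_lt_or_eq_dec [xy|<-]; last exact: Rle_refl.
exact/Rlt_le/ln_increasing.
Qed.

Lemma ln_INR_pos (q : nat) : (1 < q)%nat -> 0 < ln (INR q).
Proof.
move=> q_gt1; rewrite -ln_1; apply: ln_increasing; first lra.
by apply/(lt_INR 1)/ssrnat.ltP.
Qed.

Lemma INR_expn (m t : nat) : INR (expn m t) = INR m ^ t.
Proof. by elim: t => [|t IH]; rewrite ?expn0 // expnS mult_INR IH. Qed.

Lemma floor_nat (x : R) : 0 <= x -> exists k : nat, INR k <= x < INR k + 1.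
Proof.
move=> x_ge0; have [up_gt up_le] := archimed x.
have up_pos : (1 <= up x)%Z.
  have : (0 < up x)%Z by apply: lt_IZR; lra.
  lia.
exists (Z.to_nat (up x - 1)); rewrite INR_IZR_INZ Znat.Z2Nat.id; last by lia.
by rewrite minus_IZR /=; lra.
Qed.

Lemma window_sizes (N : nat) (rho_r rho_w : R) :
  0 <= rho_r -> 0 <= rho_w -> rho_r + rho_w <= 1 ->
  exists k w : nat,
    [/\ INR k <= rho_r * INR N, INR w <= rho_w * INR N, (k + w <= N)%nat
      & INR (N - k - w) <= INR N * (1 - rho_r - rho_w) + 2].
Proof.
move=> rho_r_ge0 rho_w_ge0 rho_le1; have N_ge0 := pos_INR N.
have [k [k_le k_gt]] := floor_nat (Rmult_le_pos _ _ rho_r_ge0 N_ge0).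
have [w [w_le w_gt]] := floor_nat (Rmult_le_pos _ _ rho_w_ge0 N_ge0).
have kw : (k + w <= N)%nat by apply/ssrnat.leP/INR_le; rewrite plus_INR; nra.
exists k, w; split=> //.
have tail : INR N = INR (N - k - w) + INR k + INR w.
  by rewrite -!plus_INR; congr INR; lia.
nra.
Qed.

Lemma ln_card_bound (M q t : nat) (delta : R) :
  delta <= 1 / 2 -> (0 < q)%nat -> INR M * (1 - delta) <= INR (expn q t) ->
  ln (INR M) <= ln 2 + INR t * ln (INR q).
Proof.
move=> delta_le q_pos bound.
have q_gt0 : 0 < INR q by apply/lt_0_INR/ssrnat.ltP.
have qt_gt0 : 0 < INR q ^ t by apply: pow_lt.
have [->|M_pos] := posnP M.
  have ln2_pos : 0 < ln 2 by rewrite -ln_1; apply: ln_increasing; lra.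
  have lnq_ge0 : 0 <= ln (INR q).
    by rewrite -ln_1; apply: ln_le; [lra | apply/(le_INR 1)/ssrnat.leP].
  by rewrite ln_INR0; have := pos_INR t; nra.
have M_gt0 : 0 < INR M by apply/lt_0_INR/ssrnat.ltP.
rewrite -ln_pow // -ln_mult //; last lra.
by apply: ln_le => //; rewrite INR_expn in bound; nra.
Qed.

Lemma rate_upper_bound (Sigma : finZmodType) (n : nat) (C : awtp_code Sigma n.+1)
    (rho_r rho_w delta : R) :
  (1 < #|Sigma|)%nat -> 0 <= rho_r -> 0 <= rho_w -> rho_r + rho_w <= 1 ->
  delta <= 1 / 2 -> is_awtp_code rho_r rho_w R0 delta C ->
  rate C <= (1 - rho_r - rho_w) + (2 + ln 2 / ln (INR #|Sigma|)) / INR n.+1.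
Proof.
move=> Sigma_gt1 rho_r_ge0 rho_w_ge0 rho_le1 delta_le code.
set L := ln (INR #|Sigma|); set B := 1 - rho_r - rho_w.
have L_pos : 0 < L := ln_INR_pos Sigma_gt1.
have N_pos : 0 < INR n.+1 by apply: lt_0_INR; lia.
have [k [w [k_le w_le kw tail_le]]] := window_sizes n.+1 rho_r_ge0 rho_w_ge0 rho_le1.
have card_bound := awtp_message_bound rho_r_ge0 rho_w_ge0 kw k_le w_le code.
have := ln_card_bound delta_le (ltnW Sigma_gt1) card_bound; rewrite -/L => ln_card.
apply: (Rmult_le_reg_r (INR n.+1 * L)); first exact: Rmult_lt_0_compat.
have -> : rate C * (INR n.+1 * L) = ln (INR #|msg C|) by rewrite /rate -/L; field; lra.
have -> : (B + (2 + ln 2 / L) / INR n.+1) * (INR n.+1 * L) =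
          INR n.+1 * B * L + 2 * L + ln 2 by field; lra.
by rewrite /B; nra.
Qed.

Lemma long_length (N0 : nat) (c eps : R) :
  0 <= c -> 0 < eps -> exists n : nat, (N0 <= n.+1)%nat /\ c / INR n.+1 <= eps.
Proof.
move=> c_ge0 eps_pos.
have ratio_ge0 : 0 <= c / eps.
  by apply: Rmult_le_pos => //; apply/Rlt_le/Rinv_0_lt_compat.
have [M [_ M_gt]] := floor_nat ratio_ge0.
exists (maxn N0 M); split; first by rewrite (leq_trans (leq_maxl N0 M)).
have M_le : INR M.+1 <= INR (maxn N0 M).+1.
  by apply/le_INR/ssrnat.leP; rewrite ltnS leq_maxr.
have N_pos : 0 < INR (maxn N0 M).+1 by apply: lt_0_INR; lia.
apply: (Rmult_le_reg_r _ _ _ N_pos).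
have -> : c / INR (maxn N0 M).+1 * INR (maxn N0 M).+1 = c by field; lra.
have : c / eps * eps = c by field; lra.
rewrite S_INR in M_le; nra.
Qed.

Theorem mainTheorem4 (Sigma : finZmodType) (rho_r rho_w : R) :
  (1 < #|Sigma|)%nat ->
  Rle R0 rho_r -> Rle R0 rho_w -> Rle (Rplus rho_r rho_w) R1 ->
  forall Rt : R, achievable_perfect Sigma rho_r rho_w Rt ->
    Rle Rt (Rminus (Rminus R1 rho_r) rho_w).
Proof.
move=> Sigma_gt1 rho_r_ge0 rho_w_ge0 rho_le1 Rt [codes [deltas [secure achieves]]].
set c := 2 + ln 2 / ln (INR #|Sigma|).
have c_ge0 : 0 <= c.
  have ln_pos := ln_INR_pos Sigma_gt1.
  have ln2_pos : 0 < ln 2 by rewrite -ln_1; apply: ln_increasing; lra.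
  by rewrite /c; have := Rdiv_lt_0_compat _ _ ln2_pos ln_pos; lra.
apply: Rle_plus_epsilon => eps eps_pos.
have xi_pos : 0 < Rmin (eps / 2) (1 / 2) by apply: Rmin_pos; lra.
have [N0 large] := achieves _ xi_pos.
have [n [n_large c_small]] := long_length N0 c_ge0 (ltac:(lra) : 0 < eps / 2).
have [rate_ge delta_le] := large _ n_large.
have xi_le1 := Rmin_l (eps / 2) (1 / 2); have xi_le2 := Rmin_r (eps / 2) (1 / 2).
have := rate_upper_bound Sigma_gt1 rho_r_ge0 rho_w_ge0 rho_le1 _ (secure n.+1).
by move=> /(_ ltac:(lra)); rewrite -/c; lra.
Qed.
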